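(* Let $n\geq 3$. There is no u-p-word for $n$-permutations of the form $u=\Diamond u_2u_3\cdots u_N$ containing exactly one $\Diamond$ (that is, with $u_2,\ldots,u_N$ all integers).
   Context: An $n$-permutation is a permutation of $\{1,\ldots,n\}$. For a word $w$ of distinct numbers, $\mathrm{red}(w)$ is obtained by replacing the $i$-th smallest letter by $i$. Let $\Diamond$ be a symbol not among the integers. A word $f=f_1\cdots f_n$ over the positive integers together with $\Diamond$, whose integer letters are pairwise distinct, covers an $n$-permutation $\pi$ if one can substitute real numbers for the occurrences of $\Diamond$ (independently) so that the resulting word has $n$ pairwise distinct entries and reduces to $\pi$; equivalently, $f_i<f_j\iff\pi_i<\pi_j$ for all positions $i,j$ holding integers. A u-p-word for $n$-permutations is a word $u_1\cdots u_N$, $N\geq n$, over this alphabet containing at least one $\Diamond$, such that every factor $u_i\cdots u_{i+n-1}$ ($1\leq i\leq N-n+1$) has pairwise distinct integer letters and every $n$-permutation is covered by exactly one of these factors. *)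

From mathcomp Require Import all_boot all_order all_fingroup.
Unset Strict Implicit. Unset Printing Implicit Defensive.

Definition letter := option nat.
Notation Diamond := (@None nat).

Definition ints (f : seq letter) : seq nat := pmap id f.

Definition pos_letters (f : seq letter) : bool := all (fun k => 0 < k) (ints f).

(* f covers the n-permutation pi: f has length n, its integer letters are
   pairwise distinct, and f_i < f_j <-> pi_i < pi_j at all positions i, j
   holding integers (the paper's equivalent formulation of covering). *)
Definition covers (n : nat) (f : seq letter) (pi : 'S_n) : Prop :=
  size f = n /\ uniq (ints f) /\
  forall (i j : 'I_n) (a b : nat),
    nth Diamond f i = Some a -> nth Diamond f j = Some b ->
    (a < b <-> pi i < pi j).

(* the upfactor u_{i+1} ... u_{i+n} (0-based start i) *)
Definition upfactor (n : nat) (u : seq letter) (i : nat) : seq letter :=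
  take n (drop i u).

Definition upword (n : nat) (u : seq letter) : Prop :=
  pos_letters u /\
  n <= size u /\
  Diamond \in u /\
  (forall i, i <= size u - n -> uniq (ints (upfactor n u i))) /\
  (forall pi : 'S_n, exists! i, i <= size u - n /\ covers n (upfactor n u i) pi).

From mathcomp Require Import all_boot all_order all_fingroup zify.
Set Implicit Arguments.
Unset Strict Implicit.

(* Let the word be Diamond a_1 ... a_m u_(m+2) ... with m = n - 1 >= 2. The
   first factor Diamond a covers exactly the permutations whose last m entries
   are order-isomorphic to a. A permutation p whose first m entries are
   order-isomorphic to a but which is not covered by Diamond a must be covered
   by the all-integer factor a u_(m+2): if a later factor F covered p, the
   factor just before F, whose last m entries are the first m of F, would
   reduce to a permutation covered both by itself and by Diamond a. Yet
   a u_(m+2) covers only one permutation, while two such p exist which differ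
   in how their last entry compares with their (m-1)-th entry. *)

(* For words of distinct letters, equal patterns mean equal reductions. *)
Definition order_pattern (s : seq nat) : seq (seq bool) :=
  [seq [seq x < y | y <- s] | x <- s].

Lemma order_pattern_map (T : Type) (g : T -> nat) (s : seq T) :
  order_pattern (map g s) = [seq [seq g x < g y | y <- s] | x <- s].
Proof.
by rewrite /order_pattern -map_comp; apply: eq_map => x /=; rewrite -map_comp.
Qed.

Lemma order_pattern_take k s :
  order_pattern (take k s) = map (take k) (take k (order_pattern s)).
Proof.
rewrite /order_pattern -map_take -map_comp.
by apply: eq_map => x /=; rewrite map_take.
Qed.

Lemma order_pattern_behead s :
  order_pattern (behead s) = map behead (behead (order_pattern s)).
Proof. by case: s => //= x s; rewrite -map_comp; apply: eq_map => y /=; case: s. Qed.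

Lemma order_pattern_eqP n s t : size s = n -> size t = n ->
  order_pattern s = order_pattern t <->
  (forall i j : 'I_n, (nth 0 s i < nth 0 s j) = (nth 0 t i < nth 0 t j)).
Proof.
move=> sn tn; split=> [E i j | E].
  have nth_pattern r : size r = n ->
      nth false (nth [::] (order_pattern r) i) j = (nth 0 r i < nth 0 r j).
    by move=> rn; rewrite (nth_map 0) ?rn // (nth_map 0) ?rn.
  by rewrite -nth_pattern // E nth_pattern.
apply: (@eq_from_nth _ [::]) => [|i]; rewrite !size_map ?sn ?tn // => ilt.
rewrite !(nth_map 0) ?sn ?tn //.
apply: (@eq_from_nth _ false) => [|j]; rewrite !size_map ?sn ?tn // => jlt.
by rewrite !(nth_map 0) ?sn ?tn // (E (Ordinal ilt) (Ordinal jlt)).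
Qed.

Definition one_line {n} (p : 'S_n) : seq nat := [seq val (p i) | i <- enum 'I_n].

Lemma size_one_line n (p : 'S_n) : size (one_line p) = n.
Proof. by rewrite size_map size_enum_ord. Qed.

Lemma nth_one_line n (p : 'S_n) (i : 'I_n) : nth 0 (one_line p) i = p i.
Proof. by rewrite (nth_map i) ?size_enum_ord // nth_ord_enum. Qed.

Lemma index_sort_ltn (t : seq nat) : uniq t ->
  {in t &, forall x y, (index x (sort leq t) < index y (sort leq t)) = (x < y)}.
Proof.
move=> t_uniq x y xt yt; have st := sort_sorted leq_total t.
have [xs ys] : x \in sort leq t /\ y \in sort leq t by rewrite !mem_sort.
apply/idP/idP => [lt_ind | lt_xy].
  rewrite ltn_neqAle (sorted_ltn_index leq_trans st) // andbT.
  by apply: contraTneq lt_ind => ->; rewrite ltnn.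
rewrite ltnNge; apply: contraTN lt_xy => /(sorted_leq_index leq_trans leqnn st).
by rewrite -leqNgt; apply.
Qed.

Lemma exists_perm_pattern n (t : seq nat) : size t = n -> uniq t ->
  exists p : 'S_n, order_pattern (one_line p) = order_pattern t.
Proof.
move=> tn t_uniq.
have t_nth_mem (i : 'I_n) : nth 0 t i \in t by rewrite mem_nth ?tn.
have rank_lt (i : 'I_n) : index (nth 0 t i) (sort leq t) < n.
  by rewrite -[ltnRHS]tn -(size_sort leq) index_mem mem_sort.
pose rank i := Ordinal (rank_lt i).
have rank_inj : injective rank.
  move=> i j /(congr1 val) /= eq_index; apply/val_inj/eqP.
  rewrite -(nth_uniq 0 _ _ t_uniq) ?tn ?ltn_ord //; apply/eqP.
  by apply: (index_inj 0 _ _ eq_index); rewrite mem_sort.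
exists (perm rank_inj); apply/(order_pattern_eqP (size_one_line _) tn) => i j.
by rewrite !nth_one_line !permE; apply: index_sort_ltn.
Qed.

Lemma ints_map_Some (t : seq nat) : ints (map Some t) = t.
Proof. by elim: t => //= x t; rewrite /ints => /= ->. Qed.

Lemma covers_SomeP n t (p : 'S_n) :
  covers n (map Some t) p <->
  [/\ size t = n, uniq t & order_pattern t = order_pattern (one_line p)].
Proof.
rewrite /covers size_map ints_map_Some.
split=> [[tn [t_uniq cmp]] | [tn t_uniq /(order_pattern_eqP tn (size_one_line p)) E]].
  split=> //; apply/(order_pattern_eqP tn (size_one_line p)) => i j.
  have := cmp i j (nth 0 t i) (nth 0 t j); rewrite !(nth_map 0) ?tn // !nth_one_line.
  by case/(_ erefl erefl) => ? ?; apply/idP/idP.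
split=> //; split=> // -[i ilt] [j jlt] a b; rewrite !(nth_map 0) ?tn // => -[<-] [<-].
by have := E (Ordinal ilt) (Ordinal jlt); rewrite !nth_one_line => ->.
Qed.

Lemma covers_Diamond_consP n a (p : 'S_n.+1) :
  covers n.+1 (Diamond :: map Some a) p <->
  [/\ size a = n, uniq a & order_pattern a = order_pattern (behead (one_line p))].
Proof.
have behead_n : size (behead (one_line p)) = n by rewrite size_behead size_one_line.
have nth_behead_one_line (i : 'I_n) : nth 0 (behead (one_line p)) i = p (lift ord0 i).
  by rewrite nth_behead -lift0 nth_one_line.
rewrite /covers /= size_map ints_map_Some.
split=> [[[an] [a_uniq cmp]] | [an a_uniq /(order_pattern_eqP an behead_n) E]].
  split=> //; apply/(order_pattern_eqP an behead_n) => i j.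
  have := cmp (lift ord0 i) (lift ord0 j) (nth 0 a i) (nth 0 a j).
  rewrite !nth_behead_one_line /= !add0n !(nth_map 0) ?an //.
  by case/(_ erefl erefl) => ? ?; apply/idP/idP.
rewrite an; split=> //; split=> // i j x y.
case: (unliftP ord0 i) => [i'|] -> //; case: (unliftP ord0 j) => [j'|] -> //=.
by rewrite !add0n !(nth_map 0) ?an // => -[<-] [<-]; rewrite E !nth_behead_one_line.
Qed.

Lemma upfactor_Diamond_cons0 m u :
  upfactor m.+1 (Diamond :: map Some u) 0 = Diamond :: map Some (take m u).
Proof. by rewrite /upfactor drop0 /= map_take. Qed.

Lemma upfactor_Diamond_consS m u i :
  upfactor m (Diamond :: map Some u) i.+1 = map Some (take m (drop i u)).
Proof. by rewrite /upfactor /= map_take map_drop. Qed.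

(* Relative to the doubled entries 2x+1 of a, the appended 2c sits just below
   the image of c, i.e. it plays the role of c - 1/2. *)
Definition rcons_below (a : seq nat) (c : nat) : seq nat :=
  rcons [seq x.*2.+1 | x <- a] c.*2.

Lemma size_rcons_below a c : size (rcons_below a c) = (size a).+1.
Proof. by rewrite size_rcons size_map. Qed.

Lemma rcons_below_uniq a c : uniq a -> uniq (rcons_below a c).
Proof.
move=> a_uniq; rewrite rcons_uniq map_inj_uniq ?a_uniq ?andbT; last first.
  by move=> x y [] /double_inj.
by apply/mapP => -[x _] /(congr1 odd); rewrite /= !odd_double.
Qed.

Lemma order_pattern_take_rcons_below a c :
  order_pattern (take (size a) (rcons_below a c)) = order_pattern a.
Proof.
rewrite /rcons_below -cats1 take_size_cat ?size_map // order_pattern_map.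
by apply: eq_map => x; apply: eq_map => y; rewrite ltnS ltn_double.
Qed.

Lemma nth_rcons_below a c i : i < size a ->
  nth 0 (rcons_below a c) i = (nth 0 a i).*2.+1.
Proof. by move=> ia; rewrite nth_rcons size_map ia (nth_map 0). Qed.

Lemma nth_rcons_below_last a c : nth 0 (rcons_below a c) (size a) = c.*2.
Proof. by rewrite nth_rcons size_map ltnn eqxx. Qed.

Section LeadingDiamond.

Variables (m : nat) (u : seq nat).
Hypothesis w_upword : upword m.+1 (Diamond :: map Some u).

Lemma prefix_size : size (take m u) = m.
Proof.
by case: w_upword => _ [size_w _]; rewrite size_takel // -ltnS -(size_map Some).
Qed.

Lemma prefix_uniq : uniq (take m u).
Proof.
case: w_upword => _ [_ [_ [factor_uniq _]]].
by have := factor_uniq 0 (leq0n _); rewrite upfactor_Diamond_cons0 /= ints_map_Some.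
Qed.

Lemma first_factor_covers (p : 'S_m.+1) :
  order_pattern (take m (one_line p)) = order_pattern (take m u) ->
  order_pattern (behead (one_line p)) != order_pattern (take m u) ->
  covers m.+1 (map Some (take m.+1 u)) p.
Proof.
move=> prefix_p shifted_p.
case: w_upword => _ [_ [_ [factor_uniq cover_unique]]].
have [[|[|j]] [[j_le cov_j] _]] := cover_unique p.
- rewrite upfactor_Diamond_cons0 in cov_j.
  by case/covers_Diamond_consP: cov_j => _ _ E; rewrite E eqxx in shifted_p.
- by rewrite upfactor_Diamond_consS drop0 in cov_j.
exfalso; rewrite /= size_map in j_le.
set prev := take m.+1 (drop j u).
have prev_size : size prev = m.+1 by rewrite size_takel // size_drop; lia.
have prev_uniq : uniq prev.
  have := factor_uniq j.+1; rewrite upfactor_Diamond_consS ints_map_Some /= size_map.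
  by apply; lia.
have [r r_pattern] := exists_perm_pattern prev_size prev_uniq.
have cov_prev : covers m.+1 (upfactor m.+1 (Diamond :: map Some u) j.+1) r.
  by rewrite upfactor_Diamond_consS; apply/covers_SomeP.
have cov0 : covers m.+1 (upfactor m.+1 (Diamond :: map Some u) 0) r.
  rewrite upfactor_Diamond_cons0; apply/covers_Diamond_consP.
  split; [exact: prefix_size | exact: prefix_uniq |].
  rewrite upfactor_Diamond_consS in cov_j; case/covers_SomeP: cov_j => _ _ cov_pattern.
  rewrite order_pattern_behead r_pattern -order_pattern_behead -prefix_p.
  rewrite order_pattern_take -cov_pattern -order_pattern_take take_takel //.
  have -> : drop j.+1 u = behead (drop j u) by rewrite -drop1 drop_drop add1n.
  by rewrite /prev; case: (drop j u).
have [i [_ i_unique]] := cover_unique r.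
have prev_le : j.+1 <= size (Diamond :: map Some u) - m.+1 by rewrite /= size_map; lia.
by move: (i_unique _ (conj (leq0n _) cov0)) (i_unique _ (conj prev_le cov_prev)) => ->.
Qed.

Lemma first_factor_pattern (v : seq nat) : size v = m.+1 -> uniq v ->
  order_pattern (take m v) = order_pattern (take m u) ->
  order_pattern (behead v) != order_pattern (take m u) ->
  order_pattern v = order_pattern (take m.+1 u).
Proof.
move=> vn v_uniq prefix_v shifted_v.
have [p p_pattern] := exists_perm_pattern vn v_uniq.
have /covers_SomeP [_ _ ->] : covers m.+1 (map Some (take m.+1 u)) p.
  apply: first_factor_covers.
    by rewrite order_pattern_take p_pattern -order_pattern_take.
  by rewrite order_pattern_behead p_pattern -order_pattern_behead.
by rewrite p_pattern.
Qed.

End LeadingDiamond.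

Theorem proposition1 (n : nat) (hn : 3 <= n) (u : seq nat) :
  ~ upword n (Diamond :: map Some u).
Proof.
case: n hn => [|[|[|k]]] // _ w_upword.
have a_size := prefix_size w_upword; have a_uniq := prefix_uniq w_upword.
set a := take k.+2 u in a_size a_uniq.
pose x := nth 0 a k; pose z := nth 0 a k.+1.
have x_neq_z : x != z by rewrite /x /z nth_uniq ?a_size // ltn_eqF.
have below_pattern c : (z < c) = (z < x) ->
    order_pattern (rcons_below a c) = order_pattern (take k.+3 u).
  move=> zc; apply: (first_factor_pattern w_upword).
  - by rewrite size_rcons_below a_size.
  - exact: rcons_below_uniq.
  - by rewrite -{1}a_size order_pattern_take_rcons_below.
  have behead_size : size (behead (rcons_below a c)) = k.+2.
    by rewrite size_behead size_rcons_below a_size.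
  apply/eqP => /(order_pattern_eqP behead_size a_size) /(_ (inord k) (inord k.+1)).
  rewrite !inordK // !nth_behead -{1}a_size nth_rcons_below_last.
  rewrite nth_rcons_below ?a_size //.
  by rewrite ltn_Sdouble zc; case: ltngtP x_neq_z.
(* Both c = x and c = max(x+1, z) lie on the same side of z as x, but the
   first lies below x and the second above. *)
have max_z : (z < maxn x.+1 z) = (z < x).
  by rewrite leq_max ltnn orbF ltnS leq_eqVlt eq_sym (negbTE x_neq_z).
have := etrans (below_pattern x erefl) (esym (below_pattern _ max_z)).
move/(order_pattern_eqP (size_rcons_below _ _) (size_rcons_below _ _)).
move/(_ (inord k) (inord k.+2)); rewrite !inordK ?a_size //; last lia.
rewrite -a_size !nth_rcons_below_last !nth_rcons_below ?a_size // !ltn_Sdouble -/x.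
by rewrite ltnn leq_max ltnSn.
Qed.
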